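(* Let $n\ge 3$ and let $S_n$ be the monoid defined below. Every element $a\in S_n$ can be written uniquely as a product $$a=a_1^{i}\,(a_1a_2\cdots a_n)^{\varepsilon}\,(a_2a_3\cdots a_n)^{j}\,b,$$ where $\varepsilon\in\{0,1\}$, $i,j$ are non-negative integers, $b\in S_n\setminus\bigl(a_1S_n\cup (a_2a_3\cdots a_n)S_n\bigr)$, and the following condition holds: if $j\ge 1$ then $\varepsilon=1$ or $i=0$. (Uniqueness means: the triple $(i,\varepsilon,j)$ and the element $b\in S_n$ are uniquely determined by $a$.)
   Context: For $n\ge 3$, $S_n$ denotes the monoid with generators $a_1,\dots,a_n$ and defining relations $a_1a_2\cdots a_n=a_{\sigma(1)}a_{\sigma(2)}\cdots a_{\sigma(n)}$ for all $\sigma$ in the cyclic subgroup of the symmetric group $\operatorname{Sym}_n$ generated by the cycle $(1,2,\dots,n)$; equivalently, $a_1a_2\cdots a_n=a_{k+1}\cdots a_na_1\cdots a_k$ for $k=1,\dots,n-1$. *)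

(* The monoid S_n is modelled as words over the alphabet 'I_n
   (letter k stands for generator a_{k+1}) modulo the monoid congruence
   generated by the defining relations. *)
From Stdlib Require Import Relations.
From mathcomp Require Import all_boot.
Set Implicit Arguments. Unset Strict Implicit. Unset Printing Implicit Defensive.

Definition wfull (n : nat) : seq 'I_n := enum 'I_n.
Definition wa1 (n : nat) : seq 'I_n := take 1 (wfull n).
Definition wtail (n : nat) : seq 'I_n := behead (wfull n).

Definition wpow (n : nat) (w : seq 'I_n) (k : nat) : seq 'I_n := flatten (nseq k w).

(* one application of a defining relation a_1...a_n = a_{k+1}...a_n a_1...a_k
   inside a word (rot k gives exactly this rotation; k = 0 or k >= n is trivial) *)
Inductive Sstep (n : nat) : seq 'I_n -> seq 'I_n -> Prop :=
| Sstep_rel (u v : seq 'I_n) (k : nat) :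
    Sstep (u ++ wfull n ++ v) (u ++ rot k (wfull n) ++ v).

Definition Seq (n : nat) : relation (seq 'I_n) := clos_refl_sym_trans _ (@Sstep n).

Definition in_rideal (n : nat) (p x : seq 'I_n) : Prop := exists w, Seq x (p ++ w).

Definition nf (n : nat) (i : nat) (e : bool) (j : nat) (b : seq 'I_n) : seq 'I_n :=
  wpow (wa1 n) i ++ (if e then wfull n else [::]) ++ wpow (wtail n) j ++ b.

Definition nf_ok (n : nat) (i : nat) (e : bool) (j : nat) (b : seq 'I_n) : Prop :=
  ~ in_rideal (wa1 n) b /\ ~ in_rideal (wtail n) b /\ (1 <= j -> e \/ i = 0).

From Stdlib Require Import Relations Classical.
From mathcomp Require Import all_boot zify.
Set Implicit Arguments. Unset Strict Implicit. Unset Printing Implicit Defensive.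

(* The whole argument rests on one invariant.  Write Delta = a_1...a_n and
   call a "window" any of its n cyclic rotations; by the defining relations
   every window equals Delta in S_n.  Every word w has a window-free reduct
   rho(w) obtained by deleting windows, and rho is unchanged by deleting a
   window anywhere; hence rho and the length are invariants of S_n.
   Concretely, rho is computed greedily from the right (each letter is pushed
   in front of an already reduced word, and a window created at the front is
   removed at once); the key lemma is that pushing a whole window in front of
   a reduced word changes nothing.

   Existence of the normal form is by induction on the length: a word in
   a_1 S_n or (a_2...a_n) S_n is that generator times a shorter word, and
   a_1 resp. a_2...a_n is absorbed into a normal form using that Delta is
   central and that (a_2...a_n) a_1 is a window.  Uniqueness: rho of a normal
   form is a_1^p (a_2...a_n)^q b with p or q zero, from which p, q and b can be
   read off, while the length recovers the number of cancelled Deltas. *)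

Section CyclicWindows.
Variables (T : eqType) (f : T -> T) (n : nat).
Hypothesis n_gt0 : 0 < n.
Hypothesis f_periodic : forall x, iter n f x = x.

Definition window (x : T) : seq T := traject f x n.

Definition step (c : T) (s : seq T) : seq T :=
  if prefix (window c) (c :: s) then drop n (c :: s) else c :: s.

Definition rho (s : seq T) : seq T := foldr step [::] s.

Definition reduced (s : seq T) : Prop := forall u x v, s <> u ++ window x ++ v.

Lemma rot_window k x : k <= n -> rot k (window x) = window (iter k f x).
Proof.
move=> le_kn; rewrite /window.
have -> : traject f x n = traject f x k ++ traject f (iter k f x) (n - k).
  by rewrite -trajectD subnKC.
have -> : traject f (iter k f x) n = traject f (iter k f x) (n - k) ++ traject f x k.
  by rewrite -{1}(subnK le_kn) trajectD -iterD subnK // f_periodic.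
by rewrite -{1}(size_traject f x k) rot_size_cat.
Qed.

Lemma rot_window_ex k x : exists y, rot k (window x) = window y.
Proof.
case: (leqP k n) => [le_kn | lt_nk]; first by exists (iter k f x); apply: rot_window.
by exists x; rewrite rot_oversize // size_traject ltnW.
Qed.

Lemma window_cons x : window x = x :: traject f (f x) n.-1.
Proof. by rewrite /window -(prednK n_gt0). Qed.

Lemma step_window c s : step c (traject f (f c) n.-1 ++ s) = s.
Proof.
rewrite /step -[c :: _]/((c :: traject f (f c) n.-1) ++ s) -window_cons.
by rewrite prefix_prefix drop_size_cat ?size_traject.
Qed.

(* A run of fewer than n consecutive letters, followed by a letter breaking the
   run, is not a window prefix, so pushing the letter before the run just conses. *)
Lemma step_run c m s : m.+1 < n -> ~~ prefix [:: iter m.+1 f c] s ->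
  step c (traject f (f c) m ++ s) = traject f c m.+1 ++ s.
Proof.
move=> lt_mn no_next; rewrite /step -[c :: _]/(traject f c m.+1 ++ s).
have [k def_n] : exists k, n = m.+1 + k.+1.
  by exists (n - m.+2); rewrite addnS -addSn subnKC.
rewrite /window def_n trajectD prefix_catr ?size_traject // eqxx /=.
by case: s no_next => //= y s; rewrite prefix0s andbT => /negbTE ->.
Qed.

Lemma insert_run k x m s : k + m < n -> ~~ prefix [:: iter (k + m) f x] s ->
  foldr step (traject f (iter k f x) m ++ s) (traject f x k) = traject f x (k + m) ++ s.
Proof.
elim: k x => [//|k IHk] x lt_kmn no_next.
rewrite /= -iterS iterSr IHk; last by rewrite -iterSr -addSn.
  by apply: step_run; rewrite -?addSn.
exact: ltnW.
Qed.

(* Pushing the n - m letters that complete a broken run of length m to a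
   window: the window is formed by the last letter and deleted with the run. *)
Lemma insert_window m x s : m < n -> ~~ prefix [:: iter m f x] s ->
  foldr step (traject f x m ++ s) (traject f (iter m f x) (n - m)) = s.
Proof.
move=> lt_mn no_next; set y := iter m f x.
have [k def_k] : exists k, n - m = k.+1 by exists (n - m.+1); lia.
have iter_y : iter (k.+1 + m) f x = x by rewrite -def_k subnK ?f_periodic // ltnW.
have def_x : iter k f (f y) = x by rewrite -iterSr /y -iterD iter_y.
have next_y : iter (k + m) f (f y) = y.
  by rewrite -iterSr -addSn /y -iterD addnC iterD iter_y.
rewrite def_k /= -[in traject f x m]def_x insert_run; last 2 first.
- lia.
- by rewrite next_y.
have -> : k + m = n.-1 by lia.
exact: step_window.
Qed.

Lemma run_prefix x s : exists m s0,
  s = traject f x m ++ s0 /\ ~~ prefix [:: iter m f x] s0.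
Proof.
elim: s x => [|c s IHs] x; first by exists 0, [::].
case: (eqVneq c x) => [-> | neq_cx].
  by have [m [s0 [-> no_next]]] := IHs (f x); exists m.+1, s0; rewrite iterSr.
by exists 0, (c :: s); rewrite /= prefix0s andbT eq_sym.
Qed.

Lemma reduced_cat u s : reduced (u ++ s) -> reduced s.
Proof. by move=> red_us u' x v def_s; apply: (red_us (u ++ u') x v); rewrite def_s catA. Qed.

Lemma reduced_run_lt x m s : reduced (traject f x m ++ s) -> m < n.
Proof.
move=> red; rewrite ltnNge; apply/negP => le_nm.
apply: (red [::] x (traject f (iter n f x) (m - n) ++ s)).
by rewrite /= /window catA -trajectD subnKC.
Qed.

Lemma foldr_step_window x s : reduced s -> foldr step s (window x) = s.
Proof.
move=> red_s; have [m [s0 [def_s no_next]]] := run_prefix x s.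
have lt_mn : m < n by apply: (@reduced_run_lt x m s0); rewrite -def_s.
rewrite /window -(subnKC (ltnW lt_mn)) trajectD foldr_cat def_s insert_window //.
by have := @insert_run m x 0 s0; rewrite !addn0 => ->.
Qed.

Lemma reduced_nil : reduced [::].
Proof. by move=> u x v /(congr1 size); rewrite /= !size_cat size_traject; lia. Qed.

Lemma step_reduced c s : reduced s -> reduced (step c s).
Proof.
rewrite /step; case: ifP => [_ | no_win] red_s.
  rewrite -(prednK n_gt0) /=; apply: (@reduced_cat (take n.-1 s)).
  by rewrite cat_take_drop.
case=> [|d u] x v /=; last by case=> _; apply: red_s.
rewrite window_cons /= => -[def_c def_s].
by move: no_win; rewrite def_c def_s window_cons /= eqxx prefix_prefix.
Qed.

Lemma reduced_rho s : reduced (rho s).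
Proof. by elim: s => [|c s IHs]; [exact: reduced_nil | exact: step_reduced]. Qed.

Lemma rho_id s : reduced s -> rho s = s.
Proof.
elim: s => [//|c s IHs] red_cs; rewrite /= IHs; last exact: (@reduced_cat [:: c]).
rewrite /step; case: ifP => // /prefixP [v def_cs].
by case: (red_cs [::] c v).
Qed.

Lemma rho_cat u v : rho (u ++ v) = foldr step (rho v) u.
Proof. exact: foldr_cat. Qed.

Lemma rho_window u x v : rho (u ++ window x ++ v) = rho (u ++ v).
Proof. by rewrite !rho_cat foldr_step_window //; apply: reduced_rho. Qed.

End CyclicWindows.

(* Letters of S_n are the elements of 'I_n, and a_{k+1} a_{k+2} ... is a run of ordS. *)
Lemma val_iter_ordS n (x : 'I_n) k : iter k (@ordS n) x = (x + k) %% n :> nat.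
Proof.
elim: k => [|k IHk]; first by rewrite addn0 modn_small.
by rewrite iterS /= IHk addnS -[((x + k) %% n).+1]addn1 modnDml addn1.
Qed.

Lemma ordS_periodic n (x : 'I_n) : iter n (@ordS n) x = x.
Proof. by apply: ord_inj; rewrite val_iter_ordS modnDr modn_small. Qed.

Lemma wpowS n (w : seq 'I_n) k : wpow w k.+1 = w ++ wpow w k.
Proof. by []. Qed.

Lemma wpowS_cat n (w : seq 'I_n) k v : wpow w k.+1 ++ v = w ++ wpow w k ++ v.
Proof. by rewrite -catA. Qed.

Lemma wpowSr n (w : seq 'I_n) k : wpow w k.+1 = wpow w k ++ w.
Proof.
elim: k => [|k IHk]; first by rewrite /wpow /= cats0.
by rewrite [LHS]wpowS [in LHS]IHk catA.
Qed.

Lemma wpowSr_cat n (w : seq 'I_n) k v : wpow w k.+1 ++ v = wpow w k ++ w ++ v.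
Proof. by rewrite wpowSr catA. Qed.

Lemma size_wpow n (w : seq 'I_n) k : size (wpow w k) = k * size w.
Proof. by elim: k => [|k IHk] //; rewrite wpowS size_cat IHk mulSn. Qed.

Lemma wpow_cat_inj n (w : seq 'I_n) q q' (y y' : seq 'I_n) :
  ~~ prefix w y -> ~~ prefix w y' -> wpow w q ++ y = wpow w q' ++ y' -> q = q' /\ y = y'.
Proof.
elim: q q' => [|q IHq] [|q'] no_wy no_wy' //=; rewrite ?wpowS -?catA.
- by move=> def_y; move: no_wy; rewrite def_y prefix_prefix.
- by move=> def_y'; move: no_wy'; rewrite -def_y' prefix_prefix.
by move/(congr1 (drop (size w))); rewrite !drop_size_cat // => /IHq [] // -> ->.
Qed.

Lemma Seq_refl n (x : seq 'I_n) : Seq x x.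
Proof. exact: rst_refl. Qed.

Lemma Seq_sym n (x y : seq 'I_n) : Seq x y -> Seq y x.
Proof. exact: rst_sym. Qed.

Lemma Seq_trans n (x y z : seq 'I_n) : Seq x y -> Seq y z -> Seq x z.
Proof. exact: rst_trans. Qed.

Lemma Seq_inv n T (g : seq 'I_n -> T) :
  (forall x y, Sstep x y -> g x = g y) -> forall x y, Seq x y -> g x = g y.
Proof. by move=> g_step x y; elim=> // x' y' z' _ -> _ ->. Qed.

Lemma Seq_size n (x y : seq 'I_n) : Seq x y -> size x = size y.
Proof.
move: x y; apply: Seq_inv => _ _ [u v k].
by rewrite !(size_cat u) !(size_cat _ v) size_rot.
Qed.

Lemma Seq_catl n (p x y : seq 'I_n) : Seq x y -> Seq (p ++ x) (p ++ y).
Proof.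
elim=> [x' y' [u v k] | x' | x' y' _ IH | x' y' z' _ IH1 _ IH2].
- by apply: rst_step; have := Sstep_rel (p ++ u) v k; rewrite -!catA.
- exact: Seq_refl.
- exact: Seq_sym.
- exact: Seq_trans IH2.
Qed.

Lemma not_rideal_prefix n (p b : seq 'I_n) : ~ in_rideal p b -> ~~ prefix p b.
Proof.
move=> not_pb; apply/prefixP => -[w def_b]; apply: not_pb.
by exists w; rewrite def_b; apply: Seq_refl.
Qed.

Section MonoidS.
Variable n' : nat.
Local Notation n := n'.+1.
Local Notation succ := (@ordS n).
Local Notation one := (succ ord0).
Local Notation window := (window succ n).
Local Notation step := (step succ n).
Local Notation rho := (rho succ n).
Local Notation reduced := (reduced succ n).

Lemma wfull_window : wfull n = window ord0.
Proof.
apply: (@eq_from_nth _ ord0); first by rewrite /wfull size_enum_ord size_traject.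
move=> i; rewrite /wfull size_enum_ord => lt_in; apply: ord_inj.
by rewrite nth_enum_ord // nth_traject // val_iter_ordS add0n modn_small.
Qed.

Lemma wa1E : wa1 n = [:: ord0].
Proof. by rewrite /wa1 wfull_window /window /= take0. Qed.

Lemma wtailE : wtail n = traject succ one n'.
Proof. by rewrite /wtail wfull_window /window. Qed.

Lemma wfull_cat : wfull n = wa1 n ++ wtail n.
Proof. by rewrite wa1E wtailE wfull_window /window. Qed.

Lemma tail_a1_window : wtail n ++ wa1 n = window one.
Proof. by rewrite wtailE wa1E /window trajectSr -cats1 -iterSr ordS_periodic. Qed.

Lemma rot_wfull (x : 'I_n) : rot x (wfull n) = window x.
Proof.
have iter_x : iter x succ ord0 = x by apply: ord_inj; rewrite val_iter_ordS add0n modn_small.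
by rewrite wfull_window (rot_window (@ordS_periodic n)) ?iter_x // ltnW.
Qed.

Lemma rho_delete_window u x v : rho (u ++ window x ++ v) = rho (u ++ v).
Proof. exact: (rho_window (ltn0Sn n') (@ordS_periodic n)). Qed.

Lemma Seq_rho (x y : seq 'I_n) : Seq x y -> rho x = rho y.
Proof.
move: x y; apply: Seq_inv => _ _ [u v k].
rewrite wfull_window; have [z ->] := rot_window_ex (@ordS_periodic n) k ord0.
by rewrite !rho_delete_window.
Qed.

Lemma Seq_window u x v : Seq (u ++ window x ++ v) (u ++ wfull n ++ v).
Proof. by apply: Seq_sym; apply: rst_step; rewrite -rot_wfull; apply: Sstep_rel. Qed.

Lemma Seq_letter c v : Seq (c :: wfull n ++ v) (wfull n ++ c :: v).
Proof.
have shift : c :: window (succ c) = window c ++ [:: c].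
  by rewrite /window -trajectS trajectSr -cats1 ordS_periodic.
apply: Seq_trans (Seq_window [::] c (c :: v)).
rewrite cat0s -[c :: v]cat1s catA -shift.
by apply: Seq_sym; apply: (Seq_window [:: c]).
Qed.

Lemma Seq_central u v : Seq (u ++ wfull n ++ v) (wfull n ++ u ++ v).
Proof.
elim: u => [|c u IHu]; first exact: Seq_refl.
exact: Seq_trans (Seq_catl [:: c] IHu) (Seq_letter c (u ++ v)).
Qed.

Lemma Seq_tail_a1 v : Seq (wtail n ++ wa1 n ++ v) (wa1 n ++ wtail n ++ v).
Proof.
rewrite catA tail_a1_window catA -wfull_cat.
exact: (Seq_window [::] one v).
Qed.

(* A word containing a window lies in Delta S_n, hence in a_1 S_n. *)
Lemma not_rideal_a1_reduced b : ~ in_rideal (wa1 n) b -> reduced b.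
Proof.
move=> not_a1 u x v def_b; apply: not_a1; exists (wtail n ++ u ++ v).
rewrite catA -wfull_cat def_b.
exact: Seq_trans (Seq_window u x v) (Seq_central u v).
Qed.

Definition has_nf (a : seq 'I_n) : Prop :=
  exists i e j b, nf_ok i e j b /\ Seq a (nf i e j b).

Lemma has_nf_Seq a a' : Seq a a' -> has_nf a' -> has_nf a.
Proof.
move=> a_a' [i [e [j [b [ok a'_nf]]]]].
by exists i, e, j, b; split=> //; apply: Seq_trans a_a' a'_nf.
Qed.

Lemma has_nf_at (x : seq 'I_n) i (e : bool) j b :
  ~ in_rideal (wa1 n) b -> ~ in_rideal (wtail n) b ->
  (1 <= j -> e \/ i = 0) -> x = nf i e j b -> has_nf x.
Proof.
by move=> b_a1 b_tail shape ->; exists i, e, j, b; split; [do !split | apply: Seq_refl].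
Qed.

(* Left multiplication by a_1 preserves having a normal form: when e = 0,
   j > 0 and i = 0, the new a_1 pairs with a_2 ... a_n into Delta. *)
Lemma has_nf_a1 w : has_nf w -> has_nf (wa1 n ++ w).
Proof.
move=> [i [e [j [b [[b_a1 [b_tail shape]] w_nf]]]]].
apply: has_nf_Seq (Seq_catl (wa1 n) w_nf) _; clear w_nf.
case: e shape => shape.
  by apply: (@has_nf_at _ i.+1 true j b) => //; [left | rewrite /nf wpowS -catA].
case: j shape => [|j] shape.
  by apply: (@has_nf_at _ i.+1 false 0 b) => //; rewrite /nf wpowS -catA.
have -> : i = 0 by case: (shape isT).
by apply: (@has_nf_at _ 0 true j b) => //; [left | rewrite /nf wfull_cat wpowS -!catA].
Qed.

Lemma tail_nf_comm i e j b : Seq (wtail n ++ nf i e j b) (nf i e j.+1 b).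
Proof.
have past_delta : Seq (wtail n ++ (if e then wfull n else [::]) ++ wpow (wtail n) j ++ b)
                      ((if e then wfull n else [::]) ++ wpow (wtail n) j.+1 ++ b).
  by rewrite wpowS -catA; case: e; [exact: Seq_central | exact: Seq_refl].
rewrite /nf; elim: i => [|i IHi]; first exact: past_delta.
rewrite !(wpowS_cat (wa1 n)).
exact: Seq_trans (Seq_tail_a1 _) (Seq_catl _ IHi).
Qed.

(* Left multiplication by a_2 ... a_n preserves having a normal form: when
   e = 0 and i > 0, one a_1 pairs with it into Delta. *)
Lemma has_nf_tail w : has_nf w -> has_nf (wtail n ++ w).
Proof.
move=> [i [e [j [b [[b_a1 [b_tail _]] w_nf]]]]].
apply: has_nf_Seq (Seq_catl (wtail n) w_nf) _; clear w_nf.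
apply: has_nf_Seq (tail_nf_comm i e j b) _.
case: e; first by apply: (@has_nf_at _ i true j.+1 b) => //; left.
case: i => [|i]; first by apply: (@has_nf_at _ 0 false j.+1 b) => //; right.
by apply: (@has_nf_at _ i true j b) => //; [left | rewrite /nf wpowSr wfull_cat -!catA].
Qed.

(* Each pair a_1 (a_2 ... a_n) is a window and disappears in the reduct. *)
Lemma rho_pairs i j c :
  rho (wpow (wa1 n) i ++ wpow (wtail n) j ++ c)
  = rho (wpow (wa1 n) (i - minn i j) ++ wpow (wtail n) (j - minn i j) ++ c).
Proof.
elim: i j => [|i IHi] [|j]; rewrite ?min0n ?minn0 ?subn0 //.
rewrite minnSS !subSS -IHi wpowSr_cat wpowS_cat [wa1 n ++ _]catA -wfull_cat wfull_window.
exact: rho_delete_window.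
Qed.

(* Number of pairs a_1 (a_2 ... a_n) absorbed by Delta in a normal form. *)
Definition cancelled (i : nat) (e : bool) (j : nat) : nat := if e then minn i j else 0.

Lemma size_nf i e j b : size (nf i e j b)
  = size (wpow (wa1 n) (i - cancelled i e j) ++ wpow (wtail n) (j - cancelled i e j) ++ b)
    + (e + cancelled i e j) * n.
Proof.
rewrite /nf /cancelled !size_cat !size_wpow wa1E wtailE size_traject.
case: e; rewrite /= ?subn0; last by lia.
rewrite /wfull size_enum_ord; have := geq_minl i j; have := geq_minr i j; nia.
Qed.

Hypothesis n'_gt0 : 0 < n'.

Lemma nf_exists a : has_nf a.
Proof.
have [N] := ubnP (size a); elim: N a => // N IHN a lt_aN.
have IH p w : 0 < size p -> Seq a (p ++ w) -> has_nf w.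
  by move=> p_gt0 /Seq_size a_pw; apply: IHN; move: lt_aN; rewrite a_pw size_cat; lia.
case: (classic (in_rideal (wa1 n) a)) => [[w a_w] | not_a1].
  by apply: has_nf_Seq a_w (has_nf_a1 (IH _ _ _ a_w)); rewrite wa1E.
case: (classic (in_rideal (wtail n) a)) => [[w a_w] | not_tail].
  by apply: has_nf_Seq a_w (has_nf_tail (IH _ _ _ a_w)); rewrite wtailE size_traject.
by exists 0, false, 0, a; split; [do !split | apply: Seq_refl].
Qed.

Lemma wtail_cons : wtail n = one :: traject succ (succ one) n'.-1.
Proof. by rewrite wtailE -[X in traject _ _ X](prednK n'_gt0). Qed.

Lemma one_neq0 : one != ord0.
Proof. by rewrite -val_eqE /= modn_small. Qed.

Lemma insert_a1s p (s : seq 'I_n) : ~~ prefix (wtail n) s ->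
  foldr step s (wpow (wa1 n) p) = wpow (wa1 n) p ++ s.
Proof.
move=> no_tail; elim: p => [//|p IHp]; rewrite wpowS foldr_cat IHp wa1E /=.
rewrite /step -wfull_window wfull_cat wa1E cat1s prefix_cons eqxx /=.
case: p {IHp} => [|p]; first by rewrite /wpow /= (negbTE no_tail).
by rewrite wtail_cons /= (negbTE one_neq0).
Qed.

Lemma prefix_a1_tails q (s : seq 'I_n) :
  ~~ prefix (wa1 n) s -> ~~ prefix (wa1 n) (wpow (wtail n) q ++ s).
Proof.
case: q => [//|q] _.
by rewrite wa1E wpowS_cat wtail_cons /= eq_sym (negbTE one_neq0).
Qed.

Lemma insert_tails q (s : seq 'I_n) : ~~ prefix (wa1 n) s ->
  foldr step s (wpow (wtail n) q) = wpow (wtail n) q ++ s.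
Proof.
move=> no_a1; elim: q => [//|q IHq]; rewrite wpowS_cat wpowS foldr_cat IHq.
have no_a1' : ~~ prefix [:: iter (n' + 0) succ one] (wpow (wtail n) q ++ s).
  by rewrite addn0 -iterSr ordS_periodic -wa1E prefix_a1_tails.
have := @insert_run _ succ n n' one 0 _ ltac:(by rewrite addn0) no_a1'.
by rewrite addn0 -wtailE.
Qed.

Lemma rho_a1s_tails p q b : p = 0 \/ q = 0 ->
  ~ in_rideal (wa1 n) b -> ~ in_rideal (wtail n) b ->
  rho (wpow (wa1 n) p ++ wpow (wtail n) q ++ b) = wpow (wa1 n) p ++ wpow (wtail n) q ++ b.
Proof.
move=> pq0 b_a1 b_tail.
rewrite !rho_cat rho_id; last exact: not_rideal_a1_reduced.
rewrite insert_tails; last exact: not_rideal_prefix.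
case: pq0 => -> //; rewrite insert_a1s //.
exact: not_rideal_prefix.
Qed.

Lemma rho_nf i e j b : nf_ok i e j b ->
  rho (nf i e j b)
  = wpow (wa1 n) (i - cancelled i e j) ++ wpow (wtail n) (j - cancelled i e j) ++ b.
Proof.
move=> [b_a1 [b_tail shape]]; rewrite /nf /cancelled.
case: e shape => shape; last first.
  rewrite !subn0 rho_a1s_tails //.
  by case: j shape => [|j] shape; [right | left; case: (shape isT)].
rewrite wfull_window rho_delete_window rho_pairs rho_a1s_tails //.
lia.
Qed.

(* Uniqueness: reduct and length of a normal form determine i, e, j and b. *)
Lemma nf_unique i e j (b : seq 'I_n) i' e' j' (b' : seq 'I_n) :
  nf_ok i e j b -> nf_ok i' e' j' b' ->
  Seq (nf i e j b) (nf i' e' j' b') -> [/\ i = i', e = e', j = j' & b = b'].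
Proof.
move=> ok ok' eq_nf; have := Seq_size eq_nf; have := Seq_rho eq_nf.
rewrite !size_nf (rho_nf ok) (rho_nf ok') => eq_rho.
rewrite eq_rho => /addnI /eqP; rewrite eqn_pmul2r // => /eqP eq_count.
case: ok ok' => [b_a1 [b_tail _]] [b_a1' [b_tail' _]].
have [eq_p eq_rest] := wpow_cat_inj (prefix_a1_tails _ (not_rideal_prefix b_a1))
  (prefix_a1_tails _ (not_rideal_prefix b_a1')) eq_rho.
have [eq_q ->] := wpow_cat_inj (not_rideal_prefix b_tail) (not_rideal_prefix b_tail') eq_rest.
move: eq_p eq_q eq_count; rewrite /cancelled; clear eq_nf eq_rho eq_rest.
by case: e e' => [] [] /= eq_p eq_q eq_count; split => //; lia.
Qed.

End MonoidS.

Theorem theorem2p1 (n : nat) (hn : 3 <= n) (a : seq 'I_n) :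
  (exists (i : nat) (e : bool) (j : nat) (b : seq 'I_n),
      nf_ok i e j b /\ Seq a (nf i e j b)) /\
  (forall (i : nat) (e : bool) (j : nat) (b : seq 'I_n)
          (i' : nat) (e' : bool) (j' : nat) (b' : seq 'I_n),
      nf_ok i e j b -> nf_ok i' e' j' b' ->
      Seq a (nf i e j b) -> Seq a (nf i' e' j' b') ->
      [/\ i = i', e = e', j = j' & Seq b b']).
Proof.
case: n hn a => [//|n'] hn a; have n'_gt0 : 0 < n' by rewrite -ltnS ltnW.
split; first exact: nf_exists.
move=> i e j b i' e' j' b' ok ok' a_nf a_nf'.
have [-> -> -> ->] := nf_unique n'_gt0 ok ok' (Seq_trans (Seq_sym a_nf) a_nf').
by split=> //; apply: Seq_refl.
Qed.
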